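(* Let $X$ be a regular Hausdorff locally countably compact topological space. (1) If $X$ is symmetrizable, then $X\times Y$ is symmetrizable for every symmetrizable topological space $Y$. (2) If $X$ has a weak base $(\mathcal{B}_x)_{x\in X}$ with every $\mathcal{B}_x$ countable (countable $\mathrm{S}_0$-character), then $X\times Y$ has countable $\mathrm{S}_0$-character for every topological space $Y$ of countable $\mathrm{S}_0$-character.
   Context: Products are with the product topology. Locally countably compact: every point has a neighborhood $K$ that is countably compact (every countably based filter whose members all meet $K$ has a refining ultrafilter converging to a point of $K$). A semi-metric on a set $Z$ is $d:Z\times Z\to[0,\infty)$ symmetric with $d(x,y)=0\iff x=y$, with balls $B(x,\epsilon)=\{y:d(x,y)<\epsilon\}$; a topological space $Z$ is symmetrizable if for some semi-metric $d$, $O\subset Z$ is open iff for every $x\in O$ there is $\epsilon>0$ with $B(x,\epsilon)\subset O$. A weak base of a topological space $Z$ is a family $(\mathcal{B}_x)_{x\in Z}$ where each $\mathcal{B}_x$ is a filter-base with $x\in\bigcap\mathcal{B}_x$ such that $U$ is open iff for every $x\in U$ there is $V\in\mathcal{B}_x$ with $V\subset U$; $Z$ has countable $\mathrm{S}_0$-character (weakly first-countable) if it has a weak base with each $\mathcal{B}_x$ countable. *)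

From Stdlib Require Import Reals.
Open Scope R_scope.

Definition set (X : Type) := X -> Prop.
Definition subset {X : Type} (A B : set X) : Prop := forall x, A x -> B x.

Record Topology (X : Type) := {
  open : set X -> Prop;
  open_full : open (fun _ => True);
  open_inter : forall U V, open U -> open V -> open (fun x => U x /\ V x);
  open_union : forall (I : Type) (f : I -> set X),
      (forall i, open (f i)) -> open (fun x => exists i, f i x)
}.
Arguments open {X} t U.

Definition prod_open {X Y : Type} (TX : Topology X) (TY : Topology Y)
  (W : set (X * Y)) : Prop :=
  forall p, W p -> exists U V, open TX U /\ open TY V /\ U (fst p) /\ V (snd p) /\
     forall q, U (fst q) -> V (snd q) -> W q.

Lemma prod_open_full {X Y} (TX : Topology X) (TY : Topology Y) :
  prod_open TX TY (fun _ => True).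
Proof.
  intros p _. exists (fun _ => True), (fun _ => True).
  repeat split; auto using open_full.
Qed.

Lemma prod_open_inter {X Y} (TX : Topology X) (TY : Topology Y) U V :
  prod_open TX TY U -> prod_open TX TY V ->
  prod_open TX TY (fun x => U x /\ V x).
Proof.
  intros HU HV p [Up Vp].
  destruct (HU p Up) as [U1 [V1 [h1 [h2 [h3 [h4 h5]]]]]].
  destruct (HV p Vp) as [U2 [V2 [g1 [g2 [g3 [g4 g5]]]]]].
  exists (fun x => U1 x /\ U2 x), (fun y => V1 y /\ V2 y).
  split; [apply open_inter; auto|]. split; [apply open_inter; auto|].
  split; [split; auto|]. split; [split; auto|].
  intros r [a b] [c d]; split; auto.
Qed.

Lemma prod_open_union {X Y} (TX : Topology X) (TY : Topology Y)
  (I : Type) (f : I -> set (X * Y)) :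
  (forall i, prod_open TX TY (f i)) ->
  prod_open TX TY (fun x => exists i, f i x).
Proof.
  intros H p [i Hi].
  destruct (H i p Hi) as [U [V [h1 [h2 [h3 [h4 h5]]]]]].
  exists U, V. repeat split; auto. intros q a b. exists i. auto.
Qed.

Definition prod_topology {X Y : Type} (TX : Topology X) (TY : Topology Y)
  : Topology (X * Y) :=
  {| open := prod_open TX TY;
     open_full := prod_open_full TX TY;
     open_inter := prod_open_inter TX TY;
     open_union := prod_open_union TX TY |}.

Definition hausdorff {X} (T : Topology X) : Prop :=
  forall x y : X, x <> y -> exists U V, open T U /\ open T V /\ U x /\ V y /\
    forall z, U z -> V z -> False.

Definition closed {X} (T : Topology X) (C : set X) : Prop :=
  open T (fun x => ~ C x).

Definition regular {X} (T : Topology X) : Prop :=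
  forall (x : X) (C : set X), closed T C -> ~ C x ->
    exists U V, open T U /\ open T V /\ U x /\ subset C V /\
      forall z, U z -> V z -> False.

Definition is_filter {X} (F : set (set X)) : Prop :=
  F (fun _ => True) /\
  (forall A B, F A -> subset A B -> F B) /\
  (forall A B, F A -> F B -> F (fun x => A x /\ B x)) /\
  ~ F (fun _ => False).

Definition is_ultrafilter {X} (F : set (set X)) : Prop :=
  is_filter F /\ forall G, is_filter G -> subset F G -> subset G F.

Definition countably_based {X} (F : set (set X)) : Prop :=
  exists B : nat -> set X, (forall n, F (B n)) /\
    forall A, F A -> exists n, subset (B n) A.

Definition converges {X} (T : Topology X) (F : set (set X)) (x : X) : Prop :=
  forall U, open T U -> U x -> F U.

Definition countably_compact {X} (T : Topology X) (K : set X) : Prop :=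
  forall F, is_filter F -> countably_based F ->
    (forall A, F A -> exists x, A x /\ K x) ->
    exists U x, is_ultrafilter U /\ subset F U /\ K x /\ converges T U x.

Definition neighborhood {X} (T : Topology X) (K : set X) (x : X) : Prop :=
  exists U, open T U /\ U x /\ subset U K.

Definition locally_countably_compact {X} (T : Topology X) : Prop :=
  forall x, exists K, neighborhood T K x /\ countably_compact T K.

Definition semimetric {Z} (d : Z -> Z -> R) : Prop :=
  (forall x y, 0 <= d x y) /\ (forall x y, d x y = d y x) /\
  (forall x y, d x y = 0 <-> x = y).

Definition ball {Z} (d : Z -> Z -> R) (x : Z) (e : R) : set Z :=
  fun y => d x y < e.

Definition symmetrizable {Z} (T : Topology Z) : Prop :=
  exists d, semimetric d /\
    forall O, open T O <-> forall x, O x -> exists e, 0 < e /\ subset (ball d x e) O.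

Definition filter_base {Z} (B : set (set Z)) : Prop :=
  (exists A, B A) /\
  forall A1 A2, B A1 -> B A2 -> exists A3, B A3 /\ subset A3 A1 /\ subset A3 A2.

Definition weak_base {Z} (T : Topology Z) (B : Z -> set (set Z)) : Prop :=
  (forall x, filter_base (B x)) /\
  (forall x A, B x A -> A x) /\
  forall U, open T U <-> forall x, U x -> exists V, B x V /\ subset V U.

Definition countable_family {Z} (C : set (set Z)) : Prop :=
  exists f : nat -> set Z, forall A, C A -> exists n, f n = A.

Definition countable_S0_character {Z} (T : Topology Z) : Prop :=
  exists B, weak_base T B /\ forall x, countable_family (B x).

(** Both hypotheses on a space say that every point [x] has a decreasing
    sequence [C x 0 ⊇ C x 1 ⊇ ...] of sets forming a weak base at [x]: the
    balls of radius [1/(n+1)] of a symmetrizing semi-metric, or finite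
    refinements of a countable weak base.  The whole theorem reduces to showing
    that, when [X] is regular, Hausdorff and locally countably compact, the
    boxes [C x n × D y n] are again such a weak base of [X × Y].  So let [W]
    contain a box around each of its points and [(x, y) ∈ W].  Choose an open
    [U ∋ x] inside a closed set [K'] contained in a countably compact set and in
    the slice [{z | (z, y) ∈ W}], and let [V] be the set of [y'] with
    [K' × {y'} ⊆ W]; then [U × V ⊆ W].  If [V] were not open at some [y'],
    there would be points [(z_m, v_m) ∉ W] with [z_m ∈ K'] and [v_m ∈ D y' m].
    Countable compactness together with the weak base at points of [K'] yields
    [w ∈ K'] and a subsequence with [z_(ψ i) ∈ C w i]; the box of [W] around
    [(w, y')] then contains some [(z_(ψ i), v_(ψ i))], a contradiction. *)

From Stdlib Require Import Reals Lia Lra Classical ClassicalEpsilon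
  FunctionalExtensionality PropExtensionality.

Lemma open_ext {X} (T : Topology X) (A B : set X) :
  (forall z, A z <-> B z) -> open T A -> open T B.
Proof.
  intros HAB HA.
  replace B with A; [exact HA|].
  apply functional_extensionality; intros z.
  apply propositional_extensionality, HAB.
Qed.

Lemma closed_compl_open {X} (T : Topology X) (V : set X) :
  open T V -> closed T (fun z => ~ V z).
Proof.
  intros HV. apply (open_ext T V); [|exact HV].
  intros z; split; [tauto | apply NNPP].
Qed.

Definition nested_weak_base {X} (T : Topology X) (C : X -> nat -> set X) : Prop :=
  (forall x n, C x n x) /\
  (forall x n m, (n <= m)%nat -> subset (C x m) (C x n)) /\
  (forall U, open T U <-> forall x, U x -> exists n, subset (C x n) U).

Lemma nested_weak_base_open {X} (T : Topology X) C :
  nested_weak_base T C ->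
  forall U x, open T U -> U x -> exists n, subset (C x n) U.
Proof. intros [_ [_ HC]] U x HU Ux. apply HC; assumption. Qed.

Lemma nested_weak_base_ext {X} (T : Topology X) C C' :
  (forall x n z, C x n z <-> C' x n z) ->
  nested_weak_base T C -> nested_weak_base T C'.
Proof.
  intros E [Cx [Cdec Copen]]. split; [|split].
  - intros x n. apply E, Cx.
  - intros x n m nm z Hz. apply E, (Cdec x n m nm), E, Hz.
  - intros U. rewrite Copen.
    split; intros H x Ux; destruct (H x Ux) as [n Hn]; exists n;
      intros z Hz; apply Hn, E, Hz.
Qed.

Lemma nested_weak_base_closed {X} (T : Topology X) C (K : set X) w :
  nested_weak_base T C -> closed T K ->
  (forall n, exists v, C w n v /\ K v) -> K w.
Proof.
  intros HC HK Hmeet. apply NNPP; intros nKw.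
  destruct (nested_weak_base_open T C HC _ w HK nKw) as [n Hn].
  destruct (Hmeet n) as [v [Cv Kv]]. exact (Hn v Cv Kv).
Qed.

Lemma nested_weak_base_separates {X} (T : Topology X) C w v :
  hausdorff T -> nested_weak_base T C -> w <> v -> exists k, ~ C w k v.
Proof.
  intros HT HC wv. destruct (HT w v wv) as [U [V [oU [oV [Uw [Vv UV]]]]]].
  destruct (nested_weak_base_open T C HC U w oU Uw) as [k Hk].
  exists k. intros Ckv. exact (UV v (Hk v Ckv) Vv).
Qed.

Definition tail {X} (x : nat -> X) (j : nat) : set X :=
  fun v => exists m, (j <= m)%nat /\ v = x m.

Lemma countably_compact_closed_tails {X} (T : Topology X) (K : set X)
  (x : nat -> X) :
  countably_compact T K -> (forall m, K (x m)) ->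
  (forall j, closed T (tail x j)) -> exists z, forall j, tail x j z.
Proof.
  intros cK Kx Hcl.
  set (F := fun A : set X => exists j, forall m, (j <= m)%nat -> A (x m)).
  assert (fF : is_filter F).
  { split; [exists 0%nat; auto|]. split; [intros A B [j Hj] AB; exists j; auto|].
    split.
    - intros A B [j1 H1] [j2 H2]. exists (Nat.max j1 j2).
      intros m Hm; split; [apply H1 | apply H2]; lia.
    - intros [j Hj]. exact (Hj j (le_n j)). }
  assert (cbF : countably_based F).
  { exists (tail x). split.
    - intros n. exists n. intros m Hm. exists m; auto.
    - intros A [j Hj]. exists j. intros v [m [jm ->]]. auto. }
  assert (mF : forall A, F A -> exists z, A z /\ K z).
  { intros A [j Hj]. exists (x j). auto. }
  destruct (cK F fF cbF mF)
    as [U [z [[[_ [Uup [Uinter Uproper]]] _] [FU [_ conv]]]]].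
  exists z. intros j. apply NNPP; intros nz.
  assert (Hout : U (fun v => ~ tail x j v)) by (apply conv; [apply Hcl | exact nz]).
  assert (Hin : U (tail x j)) by (apply FU; exists j; intros m jm; exists m; auto).
  apply Uproper, (Uup _ _ (Uinter _ _ Hout Hin)). intros v [a b]. exact (a b).
Qed.

Section ClusterSubsequence.
Variables (X : Type) (T : Topology X) (C : X -> nat -> set X).
Hypothesis HT : hausdorff T.
Hypothesis HC : nested_weak_base T C.

Lemma nested_weak_base_avoid_segment (x : nat -> X) w j i :
  (forall m, (j <= m < i)%nat -> x m <> w) ->
  exists k, forall m, (j <= m < i)%nat -> ~ C w k (x m).
Proof.
  destruct HC as [_ [Cdec _]].
  induction i as [|i IH]; intros Hne.
  - exists 0%nat. lia.
  - destruct IH as [k Hk]; [intros m Hm; apply Hne; lia|].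
    destruct (Nat.le_gt_cases j i) as [ji | ij].
    + destruct (nested_weak_base_separates T C w (x i) HT HC
                  (fun E => Hne i ltac:(lia) (eq_sym E))) as [k1 Hk1].
      exists (Nat.max k k1). intros m Hm Cm.
      destruct (Nat.eq_dec m i) as [-> | mi].
      * apply Hk1, (Cdec w k1 (Nat.max k k1)); [lia | exact Cm].
      * apply (Hk m); [lia|]. apply (Cdec w k (Nat.max k k1)); [lia | exact Cm].
    + exists k. intros m Hm. apply Hk. lia.
Qed.

Lemma nested_weak_base_nonclosed_tail (x : nat -> X) w j :
  ~ tail x j w -> (forall n, exists v, C w n v /\ tail x j v) ->
  exists psi : nat -> nat, (forall i, (i <= psi i)%nat) /\ forall i, C w i (x (psi i)).
Proof.
  intros nw Hmeet. destruct HC as [_ [Cdec _]].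
  enough (Hpsi : forall i, exists m, (i <= m)%nat /\ C w i (x m)).
  { destruct (choice _ Hpsi) as [psi H]. exists psi. split; apply H. }
  intros i.
  destruct (nested_weak_base_avoid_segment x w j i) as [k Hk].
  { intros m Hm E. apply nw. exists m. split; [lia | congruence]. }
  destruct (Hmeet (Nat.max k i)) as [v [Cv [m [jm ->]]]].
  exists m. split.
  - destruct (Nat.le_gt_cases i m) as [im | mi]; [exact im|].
    exfalso. apply (Hk m); [lia|]. apply (Cdec w k (Nat.max k i)); [lia | exact Cv].
  - apply (Cdec w i (Nat.max k i)); [lia | exact Cv].
Qed.

(* If every tail is closed, the sequence takes some value infinitely often;
   otherwise a point adherent to a tail but outside it is the limit. *)
Lemma countably_compact_cluster_subsequence (K K' : set X) (x : nat -> X) :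
  countably_compact T K -> closed T K' -> subset K' K -> (forall m, K' (x m)) ->
  exists w (psi : nat -> nat),
    K' w /\ (forall i, (i <= psi i)%nat) /\ forall i, C w i (x (psi i)).
Proof.
  intros cK clK' K'K K'x.
  assert (Hsub : exists w (psi : nat -> nat),
            (forall i, (i <= psi i)%nat) /\ forall i, C w i (x (psi i))).
  { destruct (classic (forall j, closed T (tail x j))) as [Hcl | Hncl].
    - destruct (countably_compact_closed_tails T K x cK (fun m => K'K _ (K'x m)) Hcl)
        as [z Hz].
      destruct (choice (fun j m => (j <= m)%nat /\ z = x m) Hz) as [psi Hpsi].
      exists z, psi. split; [apply Hpsi|].
      intros i. destruct (Hpsi i) as [_ <-]. apply HC.
    - apply not_all_ex_not in Hncl as [j Hj].
      unfold closed in Hj. rewrite (proj2 (proj2 HC)) in Hj.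
      apply not_all_ex_not in Hj as [w Hw]. apply imply_to_and in Hw as [nw Hw].
      exists w. apply (nested_weak_base_nonclosed_tail x w j nw).
      intros n. apply NNPP; intros Hn. apply Hw. exists n.
      intros v Cv tv. apply Hn. eauto. }
  destruct Hsub as [w [psi [Hpsi Cw]]].
  exists w, psi. repeat split; [|exact Hpsi | exact Cw].
  apply (nested_weak_base_closed T C K' w HC clK').
  intros n. exists (x (psi n)). auto.
Qed.

End ClusterSubsequence.

Lemma closed_countably_compact_nbhd {X} (T : Topology X) (G : set X) x :
  regular T -> locally_countably_compact T -> open T G -> G x ->
  exists U K K', open T U /\ U x /\ subset U K' /\ closed T K' /\
    subset K' G /\ subset K' K /\ countably_compact T K.
Proof.
  intros reg lcc oG Gx.
  destruct (lcc x) as [K [[O [oO [Ox OK]]] cK]].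
  destruct (reg x (fun z => ~ (G z /\ O z))) as [U [V [oU [oV [Ux [sV UV]]]]]].
  { apply closed_compl_open, open_inter; assumption. }
  { tauto. }
  assert (Hin : forall z, ~ V z -> G z /\ O z).
  { intros z nV. apply NNPP; intros H. exact (nV (sV z H)). }
  exists U, K, (fun z => ~ V z). repeat split.
  - exact oU.
  - exact Ux.
  - intros z Uz Vz. exact (UV z Uz Vz).
  - apply closed_compl_open, oV.
  - intros z nV. apply Hin, nV.
  - intros z nV. apply OK, Hin, nV.
  - exact cK.
Qed.

Definition prod_box {X Y} (C : X -> nat -> set X) (D : Y -> nat -> set Y) :
  X * Y -> nat -> set (X * Y) :=
  fun p n q => C (fst p) n (fst q) /\ D (snd p) n (snd q).

Section ProductWeakBase.
Variables (X Y : Type) (TX : Topology X) (TY : Topology Y).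
Variables (C : X -> nat -> set X) (D : Y -> nat -> set Y).
Hypothesis HX : hausdorff TX.
Hypothesis HC : nested_weak_base TX C.
Hypothesis HD : nested_weak_base TY D.

Lemma box_open_uniform_slice (W : set (X * Y)) (K K' : set X) :
  (forall p, W p -> exists n, subset (prod_box C D p n) W) ->
  countably_compact TX K -> closed TX K' -> subset K' K ->
  open TY (fun y => forall z, K' z -> W (z, y)).
Proof.
  intros HW cK clK' K'K.
  destruct HD as [_ [Ddec Dopen]].
  apply Dopen. intros y Hy. apply NNPP; intros Hn.
  assert (Hbad : forall m, exists p : X * Y, K' (fst p) /\ D y m (snd p) /\ ~ W p).
  { intros m. apply NNPP; intros Hm. apply Hn. exists m.
    intros v Dv z K'z. apply NNPP; intros nW. apply Hm. exists (z, v). auto. }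
  destruct (choice _ Hbad) as [s Hs].
  destruct (countably_compact_cluster_subsequence X TX C HX HC K K'
              (fun m => fst (s m)) cK clK' K'K (fun m => proj1 (Hs m)))
    as [w [psi [K'w [Hpsi Cw]]]].
  destruct (HW (w, y) (Hy w K'w)) as [n Hn'].
  destruct (Hs (psi n)) as [_ [Dy nW]].
  apply nW, Hn'. split.
  - apply Cw.
  - apply (Ddec y n (psi n) (Hpsi n)), Dy.
Qed.

Lemma prod_nested_weak_base :
  regular TX -> locally_countably_compact TX ->
  nested_weak_base (prod_topology TX TY) (prod_box C D).
Proof.
  intros reg lcc.
  pose proof HC as [Cx [Cdec _]]. pose proof HD as [Dx [Ddec _]].
  split; [|split].
  - intros p n. split; [apply Cx | apply Dx].
  - intros p n m nm q [Cq Dq]. split; [apply (Cdec _ n m) | apply (Ddec _ n m)]; assumption.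
  - intros W. cbn [open prod_topology]. split.
    + intros HW p Wp. destruct (HW p Wp) as [U [V [oU [oV [Up [Vp UVW]]]]]].
      destruct (nested_weak_base_open TX C HC U _ oU Up) as [n Hn].
      destruct (nested_weak_base_open TY D HD V _ oV Vp) as [m Hm].
      exists (Nat.max n m). intros q [Cq Dq]. apply UVW.
      * apply Hn, (Cdec _ n (Nat.max n m)); [lia | exact Cq].
      * apply Hm, (Ddec _ m (Nat.max n m)); [lia | exact Dq].
    + intros HW [x y] Wxy.
      assert (oslice : open TX (fun z => W (z, y))).
      { apply (proj2 (proj2 HC)). intros z Wz. destruct (HW _ Wz) as [n Hn].
        exists n. intros v Cv. apply (Hn (v, y)). split; [exact Cv | apply Dx]. }
      destruct (closed_countably_compact_nbhd TX _ x reg lcc oslice Wxy)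
        as [U [K [K' [oU [Ux [UK' [clK' [K'W [K'K cK]]]]]]]]].
      exists U, (fun y' => forall z, K' z -> W (z, y')).
      repeat split.
      * exact oU.
      * exact (box_open_uniform_slice W K K' HW cK clK' K'K).
      * exact Ux.
      * exact K'W.
      * intros [a b] Ua Vb. apply Vb, UK', Ua.
Qed.

End ProductWeakBase.

Definition ball_base {Z} (d : Z -> Z -> R) : Z -> nat -> set Z :=
  fun x n => ball d x (/ (INR n + 1)).

Lemma inv_succ_pos n : 0 < / (INR n + 1).
Proof. apply Rinv_0_lt_compat. pose proof (pos_INR n). lra. Qed.

Lemma inv_succ_le n m : (n <= m)%nat -> / (INR m + 1) <= / (INR n + 1).
Proof.
  intros nm. apply le_INR in nm. pose proof (pos_INR n).
  apply Rinv_le_contravar; lra.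
Qed.

Lemma inv_succ_lt e : 0 < e -> exists n, / (INR n + 1) < e.
Proof.
  intros He. destruct (archimed_cor1 e He) as [N [HN N0]].
  exists (N - 1)%nat.
  replace (INR (N - 1) + 1) with (INR N); [exact HN|].
  rewrite minus_INR by lia. simpl. ring.
Qed.

Lemma ball_inside_iff {Z} (d : Z -> Z -> R) (O : set Z) x :
  (exists e, 0 < e /\ subset (ball d x e) O) <-> exists n, subset (ball_base d x n) O.
Proof.
  split.
  - intros [e [He sub]]. destruct (inv_succ_lt e He) as [n Hn].
    exists n. intros y By. apply sub. unfold ball_base, ball in *. lra.
  - intros [n Hn]. exists (/ (INR n + 1)). split; [apply inv_succ_pos | exact Hn].
Qed.

Lemma nested_weak_base_of_symmetrizing {Z} (T : Topology Z) d :
  semimetric d ->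
  (forall O, open T O <-> forall x, O x -> exists e, 0 < e /\ subset (ball d x e) O) ->
  nested_weak_base T (ball_base d).
Proof.
  intros [_ [_ d0]] Hopen. split; [|split].
  - intros x n. unfold ball_base, ball. rewrite (proj2 (d0 x x) eq_refl). apply inv_succ_pos.
  - intros x n m nm y. unfold ball_base, ball. pose proof (inv_succ_le n m nm). lra.
  - intros O. rewrite Hopen.
    split; intros H x Ox; apply ball_inside_iff, H, Ox.
Qed.

Lemma symmetrizable_of_nested_balls {Z} (T : Topology Z) d :
  semimetric d -> nested_weak_base T (ball_base d) -> symmetrizable T.
Proof.
  intros Hd [_ [_ Hopen]]. exists d. split; [exact Hd|].
  intros O. rewrite Hopen.
  split; intros H x Ox; apply ball_inside_iff, H, Ox.
Qed.

Definition max_dist {X Y} (dX : X -> X -> R) (dY : Y -> Y -> R) (p q : X * Y) : R :=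
  Rmax (dX (fst p) (fst q)) (dY (snd p) (snd q)).

Lemma semimetric_max_dist {X Y} (dX : X -> X -> R) (dY : Y -> Y -> R) :
  semimetric dX -> semimetric dY -> semimetric (max_dist dX dY).
Proof.
  intros [X0 [Xs Xz]] [Y0 [Ys Yz]]. unfold max_dist. split; [|split].
  - intros p q. eapply Rle_trans; [apply X0 | apply Rmax_l].
  - intros p q. rewrite Xs, Ys. reflexivity.
  - intros [a b] [a' b']; simpl. split.
    + intros E. pose proof (X0 a a'). pose proof (Y0 b b').
      pose proof (Rmax_l (dX a a') (dY b b')). pose proof (Rmax_r (dX a a') (dY b b')).
      rewrite (proj1 (Xz a a')), (proj1 (Yz b b')) by lra. reflexivity.
    + intros E. injection E as -> ->.
      rewrite (proj2 (Xz a' a') eq_refl), (proj2 (Yz b' b') eq_refl).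
      apply Rmax_left, Rle_refl.
Qed.

Lemma prod_box_ball_base {X Y} (dX : X -> X -> R) (dY : Y -> Y -> R) p n q :
  prod_box (ball_base dX) (ball_base dY) p n q <-> ball_base (max_dist dX dY) p n q.
Proof. symmetry. apply Rmax_Rlt. Qed.

Lemma countable_filter_base_nested {Z} (B : set (set Z)) :
  filter_base B -> countable_family B ->
  exists c : nat -> set Z, (forall n, B (c n)) /\
    (forall n m, (n <= m)%nat -> subset (c m) (c n)) /\
    (forall A, B A -> exists n, subset (c n) A).
Proof.
  intros [[A0 BA0] Bmeet] [f Hf].
  (* [f] may also enumerate sets outside [B]; those are replaced by [A0]. *)
  set (g := fun n => if excluded_middle_informative (B (f n)) then f n else A0).
  assert (Bg : forall n, B (g n)).
  { intros n. unfold g. destruct excluded_middle_informative; assumption. }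
  assert (g_onto : forall A, B A -> exists n, g n = A).
  { intros A BA. destruct (Hf A BA) as [n <-]. exists n.
    unfold g. destruct excluded_middle_informative; tauto. }
  destruct (choice (fun (p : set Z * set Z) A3 =>
              B (fst p) -> B (snd p) -> B A3 /\ subset A3 (fst p) /\ subset A3 (snd p)))
    as [meet Hmeet].
  { intros [A1 A2]. destruct (classic (B A1 /\ B A2)) as [[B1 B2] | nB].
    - destruct (Bmeet A1 A2 B1 B2) as [A3 H3]. exists A3. auto.
    - exists A1. simpl. tauto. }
  set (c := fix c n := match n with
                       | O => g O
                       | S k => meet (c k, g (S k))
                       end).
  assert (Hc : forall n, B (c n) /\ subset (c n) (g n)).
  { induction n as [|n [Bc _]]; simpl.
    - split; [apply Bg | intros z; auto].
    - destruct (Hmeet (c n, g (S n)) Bc (Bg _)) as [B3 [_ sub]]. auto. }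
  exists c. split; [|split].
  - intros n. apply Hc.
  - intros n m nm. induction nm as [|m nm IH]; [intros z; auto|].
    intros z Hz. apply IH. simpl in Hz.
    apply (Hmeet (c m, g (S m)) (proj1 (Hc m)) (Bg _)), Hz.
  - intros A BA. destruct (g_onto A BA) as [n <-]. exists n. apply Hc.
Qed.

Lemma nested_weak_base_of_countable_S0 {Z} (T : Topology Z) :
  countable_S0_character T -> exists C, nested_weak_base T C.
Proof.
  intros [B [[Bfb [Bmem Bopen]] Bcnt]].
  destruct (choice (fun x c => (forall n, B x (c n)) /\
                  (forall n m, (n <= m)%nat -> subset (c m) (c n)) /\
                  (forall A, B x A -> exists n, subset (c n) A)))
    as [C HC].
  { intros x. apply countable_filter_base_nested; [apply Bfb | apply Bcnt]. }
  exists C. split; [|split].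
  - intros x n. apply Bmem, HC.
  - intros x. apply HC.
  - intros U. rewrite Bopen. split.
    + intros H x Ux. destruct (H x Ux) as [V [BV VU]].
      destruct (proj2 (proj2 (HC x)) V BV) as [n Hn].
      exists n. intros z Cz. apply VU, Hn, Cz.
    + intros H x Ux. destruct (H x Ux) as [n Hn]. exists (C x n).
      split; [apply HC | exact Hn].
Qed.

Lemma countable_S0_of_nested_weak_base {Z} (T : Topology Z) C :
  nested_weak_base T C -> countable_S0_character T.
Proof.
  intros [Cx [Cdec Copen]].
  exists (fun x A => exists n, A = C x n). split; [split; [|split]|].
  - intros x. split; [exists (C x 0%nat), 0%nat; reflexivity|].
    intros A1 A2 [n1 ->] [n2 ->]. exists (C x (Nat.max n1 n2)).
    split; [eauto | split; apply Cdec; lia].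
  - intros x A [n ->]. apply Cx.
  - intros U. rewrite Copen.
    split; intros H x Ux; destruct (H x Ux) as [n Hn].
    + exists (C x n). eauto.
    + destruct Hn as [[k ->] Hk]. eauto.
  - intros x. exists (C x). intros A [n ->]. eauto.
Qed.

Theorem theorem6p1 (X : Type) (TX : Topology X) :
  regular TX -> hausdorff TX -> locally_countably_compact TX ->
  (symmetrizable TX ->
     forall (Y : Type) (TY : Topology Y),
       symmetrizable TY -> symmetrizable (prod_topology TX TY)) /\
  (countable_S0_character TX ->
     forall (Y : Type) (TY : Topology Y),
       countable_S0_character TY -> countable_S0_character (prod_topology TX TY)).
Proof.
  intros reg hau lcc. split.
  - intros [dX [HdX HX]] Y TY [dY [HdY HY]].
    apply (symmetrizable_of_nested_balls _ (max_dist dX dY)).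
    + apply semimetric_max_dist; assumption.
    + apply (nested_weak_base_ext _ _ _ (prod_box_ball_base dX dY)).
      apply prod_nested_weak_base; try assumption;
        apply nested_weak_base_of_symmetrizing; assumption.
  - intros HX Y TY HY.
    destruct (nested_weak_base_of_countable_S0 TX HX) as [C HC].
    destruct (nested_weak_base_of_countable_S0 TY HY) as [D HD].
    apply (countable_S0_of_nested_weak_base _ (prod_box C D)).
    apply prod_nested_weak_base; assumption.
Qed.
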